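(* For a hypergraph $H$ on a finite set $X$, let $\gamma(H)\in\mathrm{Bool}(X)$ be $\gamma(H)(A)=|\{Y\in E(H)\mid Y\subseteq A\}|$. Then: the map $H\mapsto\gamma(H)$ is injective; $\gamma(H)$ is rigid; for hypergraphs $G$ on $X$ and $H$ on $Y$ with $X\cap Y=\emptyset$, $\gamma(GH)=\gamma(G)\star_1\gamma(H)$, where $E(GH)=E(G)\sqcup E(H)$; for $X'\subseteq X$, $\gamma(H_{\mid X'})=\gamma(H)_{\mid X'}$ where $E(H_{\mid X'})=\{Y\in E(H)\mid Y\subseteq X'\}$; and $\gamma(H)$ is modular iff every hyperedge of $H$ has cardinality $1$.
   Context: A boolean function on a finite set $X$ is a map $f:\mathcal{P}(X)\to\mathbb{Z}$ with $f(\emptyset)=0$; $\mathrm{Bool}(X)$ is their set; $f_{\mid Y}$ is the restriction to $\mathcal{P}(Y)$. For disjoint $X,Y$, $(f\star_1g)(A)=f(A\cap X)+g(A\cap Y)$. $f$ is modular if $f(A)=\sum_{x\in A}f(\{x\})$ for all $A\subseteq X$. For nonempty $X$, $f$ is indecomposable if $f=f'\star_1f''$ with $f'\in\mathrm{Bool}(X\setminus Y)$, $f''\in\mathrm{Bool}(Y)$ forces $Y\in\{\emptyset,X\}$. Each $f$ decomposes uniquely as $f=\prod^{\star_1}_{Y}f_{\mid Y}$ over the classes $Y$ of an equivalence on $X$ with each $f_{\mid Y}$ indecomposable; these classes are the indecomposable components. An indecomposable $f$ is rigid if for all disjoint $A,B\subseteq X$ with $f(A\sqcup B)=f(A)+f(B)$,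 one has $f(A'\sqcup B')=f(A')+f(B')$ for all $A'\subseteq A$, $B'\subseteq B$; a general $f$ is rigid if $f_{\mid Y}$ is rigid for each indecomposable component $Y$. A hypergraph $H$ on $X$ is a set $E(H)$ of nonempty subsets of $X$ (hyperedges). *)

(* Subsets of a finite set X are modelled inside an ambient
   finType T: X : {set T}, subsets A : {set T} with A \subset X. *)
From HB Require Import structures.
From mathcomp Require Import all_boot all_order all_algebra.
Set Implicit Arguments. Unset Strict Implicit. Unset Printing Implicit Defensive.
Import Order.TTheory GRing.Theory Num.Theory.
Local Open Scope ring_scope.

Section BoolFun.
Variable T : finType.

(* A boolean function on X : a map P(X) -> Z sending the empty set to 0.
   It is represented by f : {set T} -> int, only its values on subsets of X
   matter. *)
Definition is_boolfun (X : {set T}) (f : {set T} -> int) : Prop := f set0 = 0.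

Definition bf_eq (X : {set T}) (f g : {set T} -> int) : Prop :=
  forall A : {set T}, A \subset X -> f A = g A.

Definition star1 (X Y : {set T}) (f g : {set T} -> int) : {set T} -> int :=
  fun A => f (A :&: X) + g (A :&: Y).

Definition modular (X : {set T}) (f : {set T} -> int) : Prop :=
  forall A : {set T}, A \subset X -> f A = \sum_(x in A) f [set x].

Definition indecomposable (X : {set T}) (f : {set T} -> int) : Prop :=
  X != set0 /\
  forall Y : {set T}, Y \subset X ->
    (exists f' f'' : {set T} -> int,
        is_boolfun (X :\: Y) f' /\ is_boolfun Y f'' /\
        bf_eq X f (star1 (X :\: Y) Y f' f'')) ->
    Y = set0 \/ Y = X.

Definition rigid_indec (X : {set T}) (f : {set T} -> int) : Prop :=
  forall A B : {set T}, A \subset X -> B \subset X -> [disjoint A & B] ->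
    f (A :|: B) = f A + f B ->
    forall A' B' : {set T}, A' \subset A -> B' \subset B ->
      f (A' :|: B') = f A' + f B'.

(* P is the partition of X into indecomposable components of f:
   f = prod^{*_1}_{Y in P} f_|Y with each f_|Y indecomposable *)
Definition indec_components (X : {set T}) (f : {set T} -> int)
    (P : {set {set T}}) : Prop :=
  partition P X /\
  (forall A : {set T}, A \subset X -> f A = \sum_(Y in P) f (A :&: Y)) /\
  (forall Y : {set T}, Y \in P -> indecomposable Y f).

Definition rigid (X : {set T}) (f : {set T} -> int) : Prop :=
  forall P : {set {set T}}, indec_components X f P ->
    forall Y : {set T}, Y \in P -> rigid_indec Y f.

Definition hypergraph (X : {set T}) (E : {set {set T}}) : Prop :=
  forall e : {set T}, e \in E -> e != set0 /\ e \subset X.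

Definition gamma (E : {set {set T}}) : {set T} -> int :=
  fun A => (#|[set e in E | e \subset A]|)%:Z.

Definition hrestrict (E : {set {set T}}) (X' : {set T}) : {set {set T}} :=
  [set e in E | e \subset X'].

End BoolFun.

(* [gamma E A] counts the edges of [E] lying inside [A]; as an integer it is
   the cardinality of [hrestrict E A], and every claim becomes a statement
   about these edge sets.  An edge can be recovered from [gamma] by Möbius
   inversion along strict inclusion, which gives injectivity.  For disjoint
   [A] and [B] the defect [gamma (A :|: B) - gamma A - gamma B] counts the
   edges inside [A :|: B] meeting both [A] and [B]; such an edge for
   [A' \subset A], [B' \subset B] is also one for [A], [B], which gives
   rigidity of every restriction of [gamma E], whatever the components.
   Finally the modular function agreeing with [gamma E] on singletons is the
   [gamma] of the singleton edges of [E], so injectivity decides modularity. *)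
From mathcomp Require Import all_boot all_order all_algebra.
Set Implicit Arguments. Unset Strict Implicit. Unset Printing Implicit Defensive.
Local Open Scope ring_scope.

Section EdgeSets.
Variable T : finType.
Implicit Types (A B X Y : {set T}) (E G H : {set {set T}}).

Lemma gammaE E A : gamma E A = #|hrestrict E A|.
Proof. by []. Qed.

Lemma hrestrict_comp E A B : hrestrict (hrestrict E B) A = hrestrict E (A :&: B).
Proof. by apply/setP => e; rewrite !inE subsetI andbA andbAC. Qed.

Lemma hrestrict_subset E A : hrestrict E A \subset E.
Proof. by apply/subsetP => e; rewrite inE => /andP[]. Qed.

Lemma hrestrictU E1 E2 A :
  hrestrict (E1 :|: E2) A = hrestrict E1 A :|: hrestrict E2 A.
Proof. by apply/setP => e; rewrite !inE andb_orl. Qed.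

Lemma hrestrict_id X E : hypergraph X E -> hrestrict E X = E.
Proof. by move=> hE; apply/setP => e; rewrite inE andb_idr // => /hE[]. Qed.

Lemma hypergraph_set0 X E : hypergraph X E -> set0 \notin E.
Proof. by move=> hE; apply/negP => /hE[/eqP]. Qed.

Lemma hypergraphU X Y G H :
  hypergraph X G -> hypergraph Y H -> hypergraph (X :|: Y) (G :|: H).
Proof.
move=> hG hH e; rewrite inE => /orP[/hG|/hH] [e0 sub_e]; split => //.
  exact: subset_trans sub_e (subsetUl X Y).
exact: subset_trans sub_e (subsetUr X Y).
Qed.

Lemma hypergraph_restrict X X' E :
  hypergraph X E -> hypergraph X' (hrestrict E X').
Proof. by move=> hE e; rewrite inE => /andP[/hE[]]. Qed.

Lemma disjoint_hypergraphs X Y G H : [disjoint X & Y] ->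
  hypergraph X G -> hypergraph Y H -> [disjoint G & H].
Proof.
move=> dXY hG hH; apply/pred0P => e /=; apply/andP => -[/hG[e0 eX] /hH[_ eY]].
case/set0Pn: e0 => x xe.
by have := disjointFr dXY (subsetP eX x xe); rewrite (subsetP eY x xe).
Qed.

Lemma gamma_restrict E X' A :
  A \subset X' -> gamma (hrestrict E X') A = gamma E A.
Proof. by move=> sAX'; rewrite !gammaE hrestrict_comp (setIidPl sAX'). Qed.

Lemma card_hrestrict_edge E e :
  #|hrestrict E e| = ((e \in E) + #|[set e' in E | e' \proper e]|)%N.
Proof.
rewrite (cardsD1 e) !inE subxx andbT; congr (_ + _)%N; apply: eq_card => e'.
by rewrite !inE properEneq andbCA andbA.
Qed.

Lemma gamma_inj X E1 E2 :
  bf_eq X (gamma E1) (gamma E2) -> hrestrict E1 X = hrestrict E2 X.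
Proof.
move=> eq_gamma.
suff memE : forall n (e : {set T}), #|e| = n -> e \subset X -> (e \in E1) = (e \in E2).
  apply/setP => e; rewrite !inE; case eX: (e \subset X); rewrite ?andbF ?andbT //.
  exact: memE.
elim/ltn_ind => n IH e size_e eX.
have eq_proper : [set e' in E1 | e' \proper e] = [set e' in E2 | e' \proper e].
  apply/setP => e'; rewrite !inE; case e'e: (e' \proper e); rewrite ?andbF ?andbT //.
  have lt_e'n : (#|e'| < n)%N by rewrite -size_e proper_card.
  exact: IH lt_e'n e' erefl (subset_trans (proper_sub e'e) eX).
move/eqP: (eq_gamma e eX); rewrite eqz_nat !card_hrestrict_edge eq_proper eqn_add2r.
by do 2 case: (_ \in _).
Qed.

Definition singleton_edges E := [set e in E | #|e| == 1%N].

Section NonemptyEdges.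
Variable E : {set {set T}}.
Hypothesis E_set0 : set0 \notin E.

Definition straddling A B :=
  hrestrict E (A :|: B) :\: (hrestrict E A :|: hrestrict E B).

Lemma card_hrestrictU A B : [disjoint A & B] ->
  #|hrestrict E (A :|: B)| =
  (#|hrestrict E A| + #|hrestrict E B| + #|straddling A B|)%N.
Proof.
move=> dAB.
have dEAB : hrestrict E A :&: hrestrict E B = set0.
  apply/setP => e; rewrite !inE andbACA andbb -subsetI (disjoint_setI0 dAB).
  by rewrite subset0; case: (e =P set0) => [->|]; rewrite ?(negbTE E_set0) ?andbF.
have sub_AB : hrestrict E A :|: hrestrict E B \subset hrestrict E (A :|: B).
  by apply/subsetP => e; rewrite !inE -andb_orr => /andP[-> /orP[] /subset_trans->];
     rewrite ?subsetUl ?subsetUr.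
rewrite /straddling -(cardsID (hrestrict E A :|: hrestrict E B)) (setIidPr sub_AB).
by rewrite cardsU dEAB cards0 subn0.
Qed.

Lemma straddlingS A B A' B' : [disjoint A & B] ->
  A' \subset A -> B' \subset B -> straddling A' B' \subset straddling A B.
Proof.
move=> dAB sA sB; apply/subsetP => e; rewrite !inE !negb_or.
case/and3P=> /andP[nA' nB'] eE eAB'; rewrite eE /= in nA' nB' *.
rewrite (subset_trans eAB' (setUSS sA sB)) andbT; apply/andP; split; apply/negP => sub_e.
  move/negP: nA'; apply; apply/subsetP => x xe.
  have /setUP[//|xB'] := subsetP eAB' x xe.
  by have := disjointFr dAB (subsetP sub_e x xe); rewrite (subsetP sB x xB').
move/negP: nB'; apply; apply/subsetP => x xe.
have /setUP[xA'|//] := subsetP eAB' x xe.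
by have := disjointFr dAB (subsetP sA x xA'); rewrite (subsetP sub_e x xe).
Qed.

Lemma gamma_additiveE A B : [disjoint A & B] ->
  (gamma E (A :|: B) == gamma E A + gamma E B) = (straddling A B == set0).
Proof.
by move=> dAB; rewrite !gammaE card_hrestrictU // -PoszD eqz_nat
  -[X in _ == X]addn0 eqn_add2l cards_eq0.
Qed.

Lemma gamma_rigid_indec Y : rigid_indec Y (gamma E).
Proof.
move=> A B _ _ dAB /eqP; rewrite gamma_additiveE // => /eqP strAB A' B' sA sB.
apply/eqP; rewrite gamma_additiveE; last exact: disjointW sA sB dAB.
by rewrite -subset0 -strAB straddlingS.
Qed.

Lemma gamma_set0 : gamma E set0 = 0.
Proof.
rewrite gammaE; apply/eqP; rewrite eqz_nat cards_eq0; apply/eqP/setP => e.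
by rewrite !inE subset0; case: eqP => [->|]; rewrite ?andbF ?(negbTE E_set0).
Qed.

Lemma gamma_set1 x : gamma E [set x] = ([set x] \in E : nat).
Proof.
have in_edges e : (e \in hrestrict E [set x]) = (e \in E) && (e == [set x]).
  by rewrite !inE subset1; case: (e =P set0) => [->|_]; rewrite ?(negbTE E_set0) ?orbF.
rewrite gammaE; congr Posz; case xE: ([set x] \in E) => /=.
  rewrite -(cards1 [set x]); apply: eq_card => e.
  by rewrite in_edges inE; case: eqP => [->|]; rewrite ?xE ?andbF.
apply/eqP; rewrite cards_eq0; apply/eqP/setP => e.
by rewrite in_edges inE; case: eqP => [->|]; rewrite ?xE ?andbF.
Qed.

Lemma gamma_singleton_edges A :
  gamma (singleton_edges E) A = \sum_(x in A) gamma E [set x].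
Proof.
rewrite gammaE.
have -> : hrestrict (singleton_edges E) A = [set [set x] | x in [set x in A | [set x] \in E]].
  apply/setP => e; rewrite !inE; apply/idP/imsetP => [|[x]].
    by case/andP=> /andP[eE /cards1P[x ex]] eA; exists x; rewrite // !inE -sub1set -ex eA eE.
  by rewrite inE => /andP[xA xE] ->; rewrite xE cards1 sub1set xA.
rewrite card_imset; last exact: set1_inj.
rewrite (eq_bigr _ (fun x _ => gamma_set1 x)) -(big_morph Posz PoszD (erefl 0%:Z)).
rewrite -sum1_card big_mkcond [in RHS]big_mkcond; congr Posz; apply: eq_bigr => x _.
by rewrite inE; case: (x \in A); case: ([set x] \in E).
Qed.

End NonemptyEdges.

Lemma gamma_setU X Y G H A : [disjoint X & Y] ->
  hypergraph X G -> hypergraph Y H ->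
  gamma (G :|: H) A = star1 X Y (gamma G) (gamma H) A.
Proof.
move=> dXY hG hH; rewrite /star1 !gammaE -!hrestrict_comp.
rewrite (hrestrict_id hG) (hrestrict_id hH) hrestrictU -PoszD; congr Posz; apply/eqP; rewrite (leq_card_setU _ _).2.
exact: disjointW (hrestrict_subset G A) (hrestrict_subset H A) (disjoint_hypergraphs dXY hG hH).
Qed.

Lemma hypergraph_singleton_edges X E :
  hypergraph X E -> hypergraph X (singleton_edges E).
Proof. by move=> hE e; rewrite inE => /andP[/hE]. Qed.

Lemma singleton_edges_id E :
  {in E, forall e : {set T}, #|e| = 1%N} -> singleton_edges E = E.
Proof. by move=> card_e; apply/setP => e; rewrite inE andb_idr // => /card_e->. Qed.

Lemma modular_gammaP X E : hypergraph X E ->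
  modular X (gamma E) <-> {in E, forall e : {set T}, #|e| = 1%N}.
Proof.
move=> hE; have E_set0 := hypergraph_set0 hE.
have modularE : modular X (gamma E) <-> bf_eq X (gamma E) (gamma (singleton_edges E)).
  by split=> eq_gamma A sAX; rewrite eq_gamma // gamma_singleton_edges.
split => [/modularE/gamma_inj | card_e].
  rewrite (hrestrict_id hE) (hrestrict_id (hypergraph_singleton_edges hE)) => -> e.
  by rewrite inE => /andP[_ /eqP].
by apply/modularE => A _; rewrite singleton_edges_id.
Qed.

End EdgeSets.

Theorem proposition4p16 (T : finType) :
  (* gamma(H) is a boolean function on X *)
  (forall (X : {set T}) (E : {set {set T}}), hypergraph X E ->
     is_boolfun X (gamma E)) /\
  (* H |-> gamma(H) is injective *)
  (forall (X : {set T}) (E1 E2 : {set {set T}}),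
     hypergraph X E1 -> hypergraph X E2 ->
     bf_eq X (gamma E1) (gamma E2) -> E1 = E2) /\
  (* gamma(H) is rigid *)
  (forall (X : {set T}) (E : {set {set T}}), hypergraph X E ->
     rigid X (gamma E)) /\
  (* gamma(GH) = gamma(G) *_1 gamma(H) *)
  (forall (X Y : {set T}) (G H : {set {set T}}),
     [disjoint X & Y] -> hypergraph X G -> hypergraph Y H ->
     hypergraph (X :|: Y) (G :|: H) /\
     bf_eq (X :|: Y) (gamma (G :|: H)) (star1 X Y (gamma G) (gamma H))) /\
  (* gamma(H_|X') = gamma(H)_|X' *)
  (forall (X X' : {set T}) (E : {set {set T}}),
     hypergraph X E -> X' \subset X ->
     hypergraph X' (hrestrict E X') /\
     bf_eq X' (gamma (hrestrict E X')) (gamma E)) /\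
  (* gamma(H) modular iff all hyperedges have cardinality 1 *)
  (forall (X : {set T}) (E : {set {set T}}), hypergraph X E ->
     (modular X (gamma E) <-> (forall e : {set T}, e \in E -> #|e| = 1%N))).
Proof.
split; first by move=> X E /hypergraph_set0; exact: gamma_set0.
split.
  by move=> X E1 E2 h1 h2 /gamma_inj; rewrite (hrestrict_id h1) (hrestrict_id h2).
split; first by move=> X E /hypergraph_set0 E_set0 P _ Y _; exact: gamma_rigid_indec.
split.
  move=> X Y G H dXY hG hH; split; first exact: hypergraphU.
  by move=> A _; exact: gamma_setU.
split.
  move=> X X' E hE _; split; first exact: hypergraph_restrict hE.
  by move=> A; exact: gamma_restrict.
exact: modular_gammaP.
Qed.
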